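(* Let $R = \mathbb{Z} \times \mathbb{Z}$ with coordinatewise addition and multiplication $(a,b)\cdot(c,d) = (ac, ad+bc)$, and consider the template $(\mathbb{Z}^+ \times \mathbb{N}, \mathbb{N}^2, \mathbb{N}^2)$ in $R$. Let $n \ge 2$ and let $(\alpha_1, \dots, \alpha_n)$ be a list of elements $\alpha_i = (a_i, b_i) \in \mathbb{Z}^+ \times \mathbb{N}$ with $\gcd(a_1, \dots, a_n) = 1$. Then $\mathrm{Frob}(\alpha_1, \dots, \alpha_n)$ is nonempty if and only if $b_i = 0$ for at least one $i$.
   Context: $\mathbb{N}$ denotes the nonnegative integers, $\mathbb{Z}^+ = \mathbb{N}\setminus\{0\}$. For the template above, $MN(\alpha_1, \dots, \alpha_n) = \{\sum_{i=1}^n \alpha_i \lambda_i : \lambda_i \in \mathbb{N}^2\}$ (product in $R$), and $\mathrm{Frob}(\alpha_1, \dots, \alpha_n) = \{w \in R : w + \mathbb{N}^2 \subseteq MN(\alpha_1, \dots, \alpha_n)\}$, where $w + \mathbb{N}^2 = \{w+u : u \in \mathbb{N}^2\}$. *)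

From mathcomp Require Import all_boot all_order all_algebra.
Set Implicit Arguments. Unset Strict Implicit. Unset Printing Implicit Defensive.
Import Order.TTheory GRing.Theory Num.Theory.
Local Open Scope ring_scope.

Definition R := (int * int)%type.

Definition radd (x y : R) : R := (x.1 + y.1, x.2 + y.2).

Definition rmul (x y : R) : R := (x.1 * y.1, x.1 * y.2 + x.2 * y.1).

Definition rsum (n : nat) (F : 'I_n -> R) : R :=
  (\sum_(i < n) (F i).1, \sum_(i < n) (F i).2).

Definition inN2 (x : R) : Prop := 0 <= x.1 /\ 0 <= x.2.

Definition inZposN (x : R) : Prop := 0 < x.1 /\ 0 <= x.2.

Definition MN (n : nat) (alpha : 'I_n -> R) (v : R) : Prop :=
  exists lam : 'I_n -> R, (forall i, inN2 (lam i)) /\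
    v = rsum (fun i => rmul (alpha i) (lam i)).

Definition Frob (n : nat) (alpha : 'I_n -> R) (w : R) : Prop :=
  forall u : R, inN2 u -> MN alpha (radd w u).

(* If every [b_i >= 1], the first coordinate of any element of MN is at most
   [sum a_i] times its second coordinate, so no translate [w + N^2] fits in MN.
   If [b_j = 0], let [c] be a conductor of the numerical semigroup generated by
   the [a_i] (it exists because their gcd is 1) and [B = sum b_i].  To reach
   [(c + x, c + B (c + a_j) + y)], write [x = k a_j + r] with [0 <= r < a_j],
   take [c + r = sum a_i mu_i] (whose second coordinate [sum b_i mu_i] is at
   most [B (c + r)]), add [alpha_j (k, 0)], which costs nothing in the second
   coordinate, and fill the remaining second coordinate, still at least [c],
   by [(0, sum a_i nu_i)]. *)

From mathcomp Require Import all_boot all_order all_algebra.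
From mathcomp Require Import zify ring.
Import Order.TTheory GRing.Theory Num.Theory.
Set Implicit Arguments. Unset Strict Implicit. Unset Printing Implicit Defensive.
Local Open Scope ring_scope.

Lemma ler_psum_term (D : numDomainType) (I : finType) (F : I -> D) (j : I) :
  (forall i, 0 <= F i) -> F j <= \sum_i F i.
Proof. by move=> F_ge0; rewrite (bigD1 j) //= lerDl sumr_ge0. Qed.

Lemma Bezoutz_big (n : nat) (a : 'I_n -> int) :
  exists u : 'I_n -> int, \sum_(i < n) u i * a i = \big[gcdz/0]_(i < n) a i.
Proof.
elim: n a => [|n IHn] a; first by exists (fun=> 0); rewrite !big_ord0.
have [u Hu] := IHn (fun i => a (lift ord0 i)).
have [s [v Hsv]] := Bezoutz (a ord0) (\big[gcdz/0]_(i < n) a (lift ord0 i)).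
exists (fun i => if unlift ord0 i is Some k then v * u k else s).
rewrite !big_ord_recl unlift_none -Hsv -Hu mulr_sumr.
by congr (_ + _); apply: eq_bigr => i _; rewrite liftK mulrA.
Qed.

Definition nonneg_comb (n : nat) (a : 'I_n -> int) (m : int) : Prop :=
  exists2 mu : 'I_n -> int, forall i, 0 <= mu i & m = \sum_(i < n) a i * mu i.

Section NonnegComb.

Variables (n : nat) (a : 'I_n -> int).

Lemma nonneg_combD m1 m2 :
  nonneg_comb a m1 -> nonneg_comb a m2 -> nonneg_comb a (m1 + m2).
Proof.
move=> [mu1 mu1_ge0 ->] [mu2 mu2_ge0 ->].
exists (fun i => mu1 i + mu2 i); first by move=> i; rewrite addr_ge0.
by rewrite -big_split; apply: eq_bigr => i _; rewrite mulrDr.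
Qed.

Lemma nonneg_combMl k m : 0 <= k -> nonneg_comb a m -> nonneg_comb a (k * m).
Proof.
move=> k_ge0 [mu mu_ge0 ->]; exists (fun i => k * mu i).
  by move=> i; rewrite mulr_ge0.
by rewrite mulr_sumr; apply: eq_bigr => i _; rewrite mulrCA.
Qed.

Lemma nonneg_comb_consecutive :
  (forall i, 0 <= a i) -> \big[gcdz/0]_(i < n) a i = 1 ->
  exists2 Q, 0 < Q & nonneg_comb a Q /\ nonneg_comb a (Q + 1).
Proof.
move=> a_ge0 gcd_a; have [u Hu] := Bezoutz_big a; rewrite gcd_a in Hu.
have Q_ge1 : 1 <= \sum_i a i * `|u i|.
  by rewrite -Hu ler_sum // => i _; rewrite mulrC ler_wpM2l // ler_norm.
exists (\sum_i a i * `|u i|); first exact: lt_le_trans Q_ge1.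
split; first by exists (fun i => `|u i|).
exists (fun i => `|u i| + u i); first by move=> i; rewrite -lerBlDr sub0r ler_normr lexx orbT.
by rewrite -Hu -big_split; apply: eq_bigr => i _; rewrite mulrDr [u i * _]mulrC.
Qed.

Lemma nonneg_comb_ge m Q : 0 < Q -> nonneg_comb a Q -> nonneg_comb a (Q + 1) ->
  Q * (Q - 1) <= m -> nonneg_comb a m.
Proof.
move=> Q_gt0 SQ SQ1 m_ge.
set q := (m %/ Q)%Z; set r := (m %% Q)%Z.
have m_eq : m = q * Q + r := divz_eq m Q.
have r_ge0 : 0 <= r by rewrite modz_ge0 // gt_eqF.
have r_lt : r < Q by rewrite ltz_pmod.
have q_gt : Q - 2 < q by rewrite -(ltr_pM2r Q_gt0); nia.
(* [r < Q <= q + 1], hence [0 <= q - r] and [m = (q - r) Q + r (Q + 1)]. *)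
rewrite (_ : m = (q - r) * Q + r * (Q + 1)); last by rewrite m_eq; ring.
by apply: nonneg_combD; apply: nonneg_combMl; rewrite // subr_ge0; lia.
Qed.

Lemma nonneg_comb_conductor :
  (forall i, 0 <= a i) -> \big[gcdz/0]_(i < n) a i = 1 ->
  exists c, forall m, c <= m -> nonneg_comb a m.
Proof.
move=> a_ge0 gcd_a; have [Q Q_gt0 [SQ SQ1]] := nonneg_comb_consecutive a_ge0 gcd_a.
by exists (Q * (Q - 1)) => m; apply: nonneg_comb_ge.
Qed.

End NonnegComb.

Section MN.

Variables (n : nat) (alpha : 'I_n -> R).

Lemma MN_add v v' : MN alpha v -> MN alpha v' -> MN alpha (radd v v').
Proof.
move=> [lam [lam_N2 ->]] [lam' [lam'_N2 ->]].
exists (fun i => radd (lam i) (lam' i)); split.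
  by move=> i; case: (lam_N2 i) (lam'_N2 i) => ? ? [? ?]; split; apply: addr_ge0.
rewrite /rsum /radd /rmul /=.
congr pair; rewrite -big_split; apply: eq_bigr => i _ /=.
  by rewrite mulrDr.
by rewrite !mulrDr addrACA.
Qed.

Lemma MN_generator j l : inN2 l -> MN alpha (rmul (alpha j) l).
Proof.
move=> l_N2; exists (fun i => if i == j then l else (0, 0)); split.
  by move=> i; case: (i == j) => //; split.
have sum_at_j (G : 'I_n -> int) : (forall i, i != j -> G i = 0) -> \sum_i G i = G j.
  by move=> G0; rewrite (bigD1 j) //= big1 ?addr0 // => i /G0.
rewrite /rsum !sum_at_j ?eqxx; first by case: (rmul _ _).
  by move=> i /negbTE ->; rewrite /rmul /= !mulr0 addr0.
by move=> i /negbTE ->; rewrite /rmul /= mulr0.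
Qed.

Lemma MN_fst_comb (mu : 'I_n -> int) : (forall i, 0 <= mu i) ->
  MN alpha (\sum_i (alpha i).1 * mu i, \sum_i (alpha i).2 * mu i).
Proof.
move=> mu_ge0; exists (fun i => (mu i, 0)); split=> [i|]; first exact: conj (mu_ge0 i) (lexx 0).
by rewrite /rsum /rmul /=; congr pair; apply: eq_bigr => i _; rewrite mulr0 add0r.
Qed.

Lemma MN_snd_comb m : nonneg_comb (fun i => (alpha i).1) m -> MN alpha (0, m).
Proof.
move=> [nu nu_ge0 ->]; exists (fun i => (0, nu i)); split=> [i|]; first exact: conj (lexx 0) (nu_ge0 i).
rewrite /rsum /rmul /=; congr pair.
  by rewrite big1 // => i _; rewrite mulr0.
by apply: eq_bigr => i _; rewrite mulr0 addr0.
Qed.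

Lemma MN_fst_le v : (forall i, 0 <= (alpha i).1) -> (forall i, 1 <= (alpha i).2) ->
  MN alpha v -> v.1 <= (\sum_i (alpha i).1) * v.2.
Proof.
move=> a_ge0 b_ge1 [lam [lam_N2 ->]]; rewrite /rsum /rmul /= mulr_suml.
apply: ler_sum => i _; apply: ler_wpM2l; first exact: a_ge0.
have term_ge0 k : 0 <= (alpha k).1 * (lam k).2 + (alpha k).2 * (lam k).1.
  by case: (lam_N2 k) => ? ?; have := a_ge0 k; have := b_ge1 k; nia.
apply: le_trans _ (ler_psum_term i term_ge0).
by case: (lam_N2 i) => ? ?; have := a_ge0 i; have := b_ge1 i; nia.
Qed.

Lemma Frob_empty w : (forall i, 0 <= (alpha i).1) -> (forall i, 1 <= (alpha i).2) ->
  ~ Frob alpha w.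
Proof.
move=> a_ge0 b_ge1 Fw; set A := \sum_i (alpha i).1.
have A_ge0 : 0 <= A by apply: sumr_ge0.
have u_N2 : inN2 (A * `|w.2| + `|w.1| + 1, 0).
  by split=> //=; rewrite addr_ge0 ?addr_ge0 ?mulr_ge0.
have := MN_fst_le a_ge0 b_ge1 (Fw _ u_N2); rewrite /radd /= addr0 -/A.
have : A * w.2 <= A * `|w.2| by rewrite ler_wpM2l // ler_norm.
have : - w.1 <= `|w.1| by rewrite -normrN ler_norm.
lia.
Qed.

Lemma sum_snd_mul_le (mu : 'I_n -> int) :
    (forall i, inZposN (alpha i)) -> (forall i, 0 <= mu i) ->
  \sum_i (alpha i).2 * mu i <= (\sum_i (alpha i).2) * \sum_i (alpha i).1 * mu i.
Proof.
move=> alpha_pos mu_ge0; rewrite mulr_sumr; apply: ler_sum => i _.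
rewrite mulrA ler_wpM2r // (le_trans (ler_psum_term i (fun l => (alpha_pos l).2))) //.
by rewrite ler_peMr -?gtz0_ge1 ?sumr_ge0 // => [l _|]; [case: (alpha_pos l) | case: (alpha_pos i)].
Qed.

Lemma Frob_of_conductor j c :
    (forall i, inZposN (alpha i)) -> (alpha j).2 = 0 ->
    (forall m, c <= m -> nonneg_comb (fun i => (alpha i).1) m) ->
  Frob alpha (c, c + (\sum_i (alpha i).2) * (c + (alpha j).1)).
Proof.
move=> alpha_pos bj0 cond [x y] [/= x_ge0 y_ge0].
set B := \sum_i (alpha i).2; set aj := (alpha j).1.
have aj_gt0 : 0 < aj by case: (alpha_pos j).
set k := (x %/ aj)%Z; set r := (x %% aj)%Z.
have x_eq : x = k * aj + r := divz_eq x aj.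
have r_ge0 : 0 <= r by rewrite modz_ge0 // gt_eqF.
have r_lt : r < aj by rewrite ltz_pmod.
have k_ge0 : 0 <= k by rewrite divz_ge0.
have [mu mu_ge0 mu_eq] := cond (c + r) ltac:(lia).
set Bmu := \sum_i (alpha i).2 * mu i.
have B_ge0 : 0 <= B by apply: sumr_ge0 => i _; case: (alpha_pos i).
have Bmu_le : Bmu <= B * (c + aj).
  apply: le_trans (sum_snd_mul_le alpha_pos mu_ge0) _.
  by rewrite -mu_eq ler_wpM2l // lerD2l ltW.
have rest_comb := cond (c + B * (c + aj) + y - Bmu) ltac:(lia).
have -> : radd (c, c + B * (c + aj)) (x, y) =
    radd (radd (c + r, Bmu) (rmul (alpha j) (k, 0))) (0, c + B * (c + aj) + y - Bmu).
  by rewrite /radd /rmul /= bj0 x_eq -/aj; congr pair; lia.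
apply: MN_add; last exact: MN_snd_comb rest_comb.
apply: MN_add; last by apply: MN_generator; split.
by rewrite mu_eq; apply: MN_fst_comb.
Qed.

End MN.

Theorem corollary4p1 (n : nat) (alpha : 'I_n -> R) :
  (2 <= n)%N ->
  (forall i, inZposN (alpha i)) ->
  \big[gcdz/0]_(i < n) (alpha i).1 = 1 ->
  ((exists w : R, Frob alpha w) <-> (exists i : 'I_n, (alpha i).2 = 0)).
Proof.
move=> _ alpha_pos gcd_a; split=> [[w Fw] | [j bj0]].
  have [/existsP[i /eqP bi0] | /existsPn no_b0] := boolP [exists i, (alpha i).2 == 0].
    by exists i.
  case: (Frob_empty _ _ Fw) => i; first by case: (alpha_pos i) => /ltW.
  by case: (alpha_pos i) (no_b0 i) => _ b_ge0 /eqP b_ne0; lia.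
have a_ge0 i : 0 <= (alpha i).1 by case: (alpha_pos i) => /ltW.
have [c cond] := nonneg_comb_conductor a_ge0 gcd_a.
by eexists; exact: Frob_of_conductor alpha_pos bj0 cond.
Qed.
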